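(* Let $(A_k,b_k,c_k)_{k\in\mathbb{Z}}$ define the discrete-time system $x_{k+1}=A_kx_k+b_ku_k$, $y_k=c_kx_k$, with $A_k\in\mathbb{R}^{n\times n}$, $b_k\in\mathbb{R}^{n\times1}$, $c_k\in\mathbb{R}^{1\times n}$. The system is completely controllable if and only if it is algebraically equivalent to a system $(\tilde A_k,\tilde b_k,\tilde c_k)_{k\in\mathbb{Z}}$ in controller canonical form.
   Context: Complete controllability: for every $k\in\mathbb{Z}$ and every $\xi_s,\xi_f\in\mathbb{R}^n$ there are controls $u_k,\dots,u_{k+n-1}$ such that $x_k=\xi_s$ implies $x_{k+n}=\xi_f$. Two systems $(A_k,b_k,c_k)_{k\in\mathbb{Z}}$ and $(\tilde A_k,\tilde b_k,\tilde c_k)_{k\in\mathbb{Z}}$ are algebraically equivalent if there are invertible matrices $\{T_k\}_{k\in\mathbb{Z}}$ with $\tilde A_k=T_{k+1}A_kT_k^{-1}$, $\tilde b_k=T_{k+1}b_k$, $\tilde c_k=c_kT_k^{-1}$ for all $k$. A system is in controller canonical form if for every $k$, $b_k=(0,\dots,0,1)^T$ and $A_k$ has ones on the superdiagonal (entries $(i,i+1)$, $i=1,\dots,n-1$), zeros elsewhere in the first $n-1$ rows, and an arbitrary last row $(\alpha_{k,1},\dots,\alpha_{k,n})$. *)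

From mathcomp Require Import all_boot all_order all_algebra.
From mathcomp Require Import reals.
Set Implicit Arguments. Unset Strict Implicit. Unset Printing Implicit Defensive.
Import Order.TTheory GRing.Theory Num.Theory.
Local Open Scope ring_scope.

Section Defs.
Variables (R : realType) (n : nat).

Fixpoint traj (A : int -> 'M[R]_n) (b : int -> 'cV[R]_n) (k : int)
  (xi : 'cV[R]_n) (u : int -> R) (m : nat) : 'cV[R]_n :=
  match m with
  | 0%N => xi
  | m'.+1 => A (k + m'%:Z) *m traj A b k xi u m' + u (k + m'%:Z) *: b (k + m'%:Z)
  end.

Definition completely_controllable (A : int -> 'M[R]_n) (b : int -> 'cV[R]_n) :=
  forall (k : int) (xs xf : 'cV[R]_n),
    exists u : int -> R, traj A b k xs u n = xf.

Definition alg_equiv (A : int -> 'M[R]_n) (b : int -> 'cV[R]_n) (c : int -> 'rV[R]_n)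
  (At : int -> 'M[R]_n) (bt : int -> 'cV[R]_n) (ct : int -> 'rV[R]_n) :=
  exists T : int -> 'M[R]_n,
    (forall k, T k \in unitmx) /\
    (forall k, At k = T (k + 1) *m A k *m invmx (T k)
            /\ bt k = T (k + 1) *m b k
            /\ ct k = c k *m invmx (T k)).

Definition ccf_b : 'cV[R]_n := \col_(i < n) ((i : nat) == n.-1)%:R.

(* ones on the superdiagonal, zeros elsewhere in the first n-1 rows;
   last row arbitrary (0-based indices). *)
Definition ccf_A (M : 'M[R]_n) : Prop :=
  forall i j : 'I_n, (i.+1 < n)%N -> M i j = ((j : nat) == i.+1)%:R.

Definition controller_canonical_form (A : int -> 'M[R]_n) (b : int -> 'cV[R]_n) :=
  forall k, ccf_A (A k) /\ b k = ccf_b.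

End Defs.

From mathcomp Require Import all_boot all_algebra.
From mathcomp Require Import reals.
From mathcomp Require Import zify.
Set Implicit Arguments. Unset Strict Implicit. Unset Printing Implicit Defensive.
Import GRing.Theory.
Local Open Scope ring_scope.

(* Complete controllability on [k, k+n] amounts to invertibility of the
   controllability matrix K_k, whose j-th column Phi(k+n, k+j+1) b_(k+j) is the
   effect at time k+n of a unit input at time k+j.  Algebraic equivalence
   multiplies K_k on the left by T_(k+n), and in controller canonical form K_k
   is unitriangular; this gives one direction.  Conversely, let q_m be the
   first row of K_(m-n)^-1, so that q_m Phi(m, m-s) b_(m-s-1) = [s = n-1] for
   s < n, and let T_k have rows q_(k+i) Phi(k+i, k).  Then T_k K_(k-n) is
   unitriangular, T_(k+1) b_k is the last unit vector, and row i of
   T_(k+1) A_k is row i+1 of T_k: the transformed system is in controller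
   canonical form. *)

Section TransitionMatrix.
Variables (R : pzRingType) (n : nat) (A : int -> 'M[R]_n).

(* [trans_mx A k m] is Phi(k+m, k) = A_(k+m-1) ... A_k. *)
Fixpoint trans_mx (k : int) (m : nat) : 'M[R]_n :=
  if m is m'.+1 then A (k + m'%:Z) *m trans_mx k m' else 1%:M.

Lemma trans_mxD k m p : trans_mx k (m + p) = trans_mx (k + m%:Z) p *m trans_mx k m.
Proof.
elim: p => [|p IHp]; first by rewrite addn0 mul1mx.
by rewrite addnS /= IHp mulmxA PoszD addrA.
Qed.

Lemma trans_mxSr k m : trans_mx k m.+1 = trans_mx (k + 1) m *m A k.
Proof. by rewrite -addn1 addnC trans_mxD /= addr0 mulmx1. Qed.

End TransitionMatrix.

Lemma mxE_mulmx_row (R : pzSemiRingType) (m n p : nat)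
    (M : 'M[R]_(m, n)) (N : 'M[R]_(n, p)) i j :
  (M *m N) i j = (row i M *m N) 0 j.
Proof. by rewrite !mxE; apply: eq_bigr => l _; rewrite !mxE. Qed.

Lemma mxE_mulmx_col (R : pzSemiRingType) (m n p : nat)
    (M : 'M[R]_(m, n)) (N : 'M[R]_(n, p)) i j :
  (M *m N) i j = (M *m col j N) i 0.
Proof. by rewrite !mxE; apply: eq_bigr => l _; rewrite !mxE. Qed.

Lemma trig_unitmx (R : comUnitRingType) (n : nat) (M : 'M[R]_n) :
  is_trig_mx M -> (forall i, M i i = 1) -> M \in unitmx.
Proof. by move=> trigM diagM; rewrite unitmxE det_trig // big1 ?unitr1. Qed.

Section ControllabilityMatrix.
Variables (R : comUnitRingType) (n : nat) (A : int -> 'M[R]_n) (b : int -> 'cV[R]_n).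

Definition ctrb_mx (k : int) : 'M[R]_n :=
  \matrix_(i, j) (trans_mx A (k + j%:Z + 1) (n - j.+1) *m b (k + j%:Z)) i 0.

Lemma col_ctrb_mx k j :
  col j (ctrb_mx k) = trans_mx A (k + j%:Z + 1) (n - j.+1) *m b (k + j%:Z).
Proof. by apply/colP => i; rewrite !mxE. Qed.

End ControllabilityMatrix.

Section AlgebraicEquivalence.
Variables (R : comUnitRingType) (n : nat) (A At : int -> 'M[R]_n) (b bt : int -> 'cV[R]_n).
Variable T : int -> 'M[R]_n.
Hypothesis unitT : forall k, T k \in unitmx.
Hypothesis eqAt : forall k, At k = T (k + 1) *m A k *m invmx (T k).
Hypothesis eqbt : forall k, bt k = T (k + 1) *m b k.

Lemma trans_mx_conj k m : trans_mx At k m = T (k + m%:Z) *m trans_mx A k m *m invmx (T k).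
Proof.
elim: m => [|m IHm] /=; first by rewrite addr0 mulmx1 mulmxV.
by rewrite IHm eqAt !mulmxA mulmxKV // -addrA -PoszD addn1.
Qed.

Lemma ctrb_mx_conj k : ctrb_mx At bt k = T (k + n%:Z) *m ctrb_mx A b k.
Proof.
apply: trmx_inj; apply/row_matrixP => j; rewrite -!tr_col; congr trmx.
rewrite [RHS]colE -mulmxA -colE !col_ctrb_mx trans_mx_conj eqbt.
rewrite -!mulmxA (mulmxA (invmx _)) mulVmx // mul1mx.
by congr (T _ *m _); have := ltn_ord j; lia.
Qed.

End AlgebraicEquivalence.

Section Controllability.
Variables (R : realType) (n : nat) (A : int -> 'M[R]_n) (b : int -> 'cV[R]_n).

Lemma trajE k xi u m :
  traj A b k xi u m = trans_mx A k m *m xi +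
    \sum_(i < m) u (k + i%:Z) *: (trans_mx A (k + i%:Z + 1) (m - i.+1) *m b (k + i%:Z)).
Proof.
elim: m => [|m IHm]; first by rewrite big_ord0 addr0 mul1mx.
rewrite /= IHm big_ord_recr /= subnn mul1mx mulmxDr mulmxA addrA mulmx_sumr.
congr (_ + _ + _); apply: eq_bigr => i _.
rewrite -scalemxAr mulmxA subSS -(subnSK (ltn_ord i)) /=.
by congr (_ *: (A _ *m _ *m _)); have := ltn_ord i; lia.
Qed.

Lemma traj_ctrb_mx k xi u :
  traj A b k xi u n = trans_mx A k n *m xi + ctrb_mx A b k *m \col_(i < n) u (k + i%:Z).
Proof.
rewrite trajE; congr (_ + _); apply/colP => i; rewrite !mxE summxE.
by apply: eq_bigr => j _; rewrite !mxE mulrC.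
Qed.

Lemma controllable_ctrb_mx :
  completely_controllable A b <-> forall k, ctrb_mx A b k \in unitmx.
Proof.
split=> [ctrlAb k | unitK k xs xf].
  rewrite -unitmx_tr -row_full_unit -sub1mx; apply/row_subP => i.
  have [u reach] := ctrlAb k 0 (row i 1%:M)^T.
  apply/submxP; exists (\col_(j < n) u (k + j%:Z))^T.
  by rewrite -trmx_mul -[row i _]trmxK -reach traj_ctrb_mx mulmx0 add0r.
pose w := invmx (ctrb_mx A b k) *m (xf - trans_mx A k n *m xs).
exists (fun z => \sum_(i < n | z == k + i%:Z) w i 0); rewrite traj_ctrb_mx.
have -> : \col_(i < n) (\sum_(j < n | k + i%:Z == k + j%:Z) w j 0) = w.
  apply/colP => i; rewrite mxE (big_pred1 i) // => j.
  by rewrite (inj_eq (addrI k)) eqz_nat eq_sym.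
by rewrite mulKVmx // addrC subrK.
Qed.

End Controllability.

Section ControllerCanonicalForm.
Variables (R : realType) (n : nat).

Lemma ccf_A_rowP (M : 'M[R]_n) :
  ccf_A M <-> forall (i : 'I_n) (lt_i1n : (i.+1 < n)%N), row i M = delta_mx 0 (Ordinal lt_i1n).
Proof.
split=> [ccfM i lt_i1n | rowM i j lt_i1n]; first by apply/rowP => j; rewrite !mxE ccfM.
by have := congr1 (fun v : 'rV_n => v 0 j) (rowM i lt_i1n); rewrite !mxE.
Qed.

Variables (At : int -> 'M[R]_n) (bt : int -> 'cV[R]_n).
Hypothesis ccfAbt : controller_canonical_form At bt.

Lemma ccf_trans_mx_b a m (i : 'I_n) :
  (i + m < n)%N -> (trans_mx At a m *m ccf_b R n) i 0 = ((i + m)%N == n.-1)%:R.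
Proof.
elim: m i => [|m IHm] i lt_imn; first by rewrite mul1mx /ccf_b mxE addn0.
have lt_i1n : (i.+1 < n)%N by lia.
have [/ccf_A_rowP rowA _] := ccfAbt (a + m%:Z).
transitivity (row i (At (a + m%:Z) *m (trans_mx At a m *m ccf_b R n)) 0 0).
  by rewrite /= mulmxA [RHS]mxE.
rewrite row_mul (rowA _ lt_i1n) -rowE mxE.
by rewrite (IHm (Ordinal lt_i1n)) /= addSnnS.
Qed.

Lemma ccf_ctrb_mx_unit k : ctrb_mx At bt k \in unitmx.
Proof.
have entry (i j : 'I_n) : (i <= j)%N -> ctrb_mx At bt k i j = ((i : nat) == j)%:R.
  move=> le_ij; rewrite mxE (ccfAbt _).2 ccf_trans_mx_b; last by have := ltn_ord j; lia.
  by congr ((_ : bool)%:R); apply/eqP/eqP; have := ltn_ord j; lia.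
apply: trig_unitmx => [|i]; last by rewrite entry ?eqxx.
by apply/is_trig_mxP => i j lt_ij; rewrite entry ?(ltnW lt_ij) ?(ltn_eqF lt_ij).
Qed.

End ControllerCanonicalForm.

Section CanonicalTransformation.
Variables (R : realType) (n : nat) (A : int -> 'M[R]_n) (b : int -> 'cV[R]_n).
Hypothesis unit_ctrb : forall k, ctrb_mx A b k \in unitmx.

Definition ccf_q (m : int) : 'rV[R]_n :=
  \row_(j < n) ((j : nat) == 0%N)%:R *m invmx (ctrb_mx A b (m - n%:Z)).

Definition ccf_transform (k : int) : 'M[R]_n :=
  \matrix_(i < n) (ccf_q (k + i%:Z) *m trans_mx A k i).

Lemma row_ccf_transform k i : row i (ccf_transform k) = ccf_q (k + i%:Z) *m trans_mx A k i.
Proof. exact: rowK. Qed.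

Lemma ccf_q_trans_mx_b m p s c : (s < n)%N -> m = p + s%:Z -> c = p - 1 ->
  (ccf_q m *m trans_mx A p s *m b c) 0 0 = (s == n.-1)%:R.
Proof.
move=> lt_sn -> ->; have lt_jn : (n.-1 - s < n)%N by lia.
transitivity ((ccf_q (p + s%:Z) *m ctrb_mx A b (p + s%:Z - n%:Z)) 0 (Ordinal lt_jn)).
  rewrite [RHS]mxE_mulmx_col col_ctrb_mx -mulmxA /=.
  by congr ((_ *m (trans_mx A _ _ *m b _)) 0 0); lia.
by rewrite mulmxKV // mxE /=; congr ((_ : bool)%:R); apply/eqP/eqP; lia.
Qed.

Lemma ccf_transform_unit k : ccf_transform k \in unitmx.
Proof.
suff : ccf_transform k *m ctrb_mx A b (k - n%:Z) \in unitmx by rewrite unitmx_mul => /andP[].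
have entry (i j : 'I_n) : (i <= j)%N ->
    (ccf_transform k *m ctrb_mx A b (k - n%:Z)) i j = ((i : nat) == j)%:R.
  move=> le_ij; have lt_jn := ltn_ord j.
  rewrite mxE_mulmx_row mxE_mulmx_col row_ccf_transform col_ctrb_mx.
  rewrite mulmxA -(mulmxA _ (trans_mx A k i)).
  rewrite [X in trans_mx A X i](_ : k = k - n%:Z + j%:Z + 1 + (n - j.+1)%N%:Z); last by lia.
  rewrite -trans_mxD ccf_q_trans_mx_b; try lia.
  by congr ((_ : bool)%:R); apply/eqP/eqP; lia.
apply: trig_unitmx => [|i]; last by rewrite entry ?eqxx.
by apply/is_trig_mxP => i j lt_ij; rewrite entry ?(ltnW lt_ij) ?(ltn_eqF lt_ij).
Qed.

Lemma ccf_transform_ccf k :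
  ccf_A (ccf_transform (k + 1) *m A k *m invmx (ccf_transform k)) /\
  ccf_transform (k + 1) *m b k = ccf_b R n.
Proof.
split.
  apply/ccf_A_rowP => i lt_i1n.
  rewrite !row_mul row_ccf_transform -(mulmxA _ _ (A k)) -trans_mxSr.
  rewrite (_ : k + 1 + i%:Z = k + (Ordinal lt_i1n : nat)%:Z); last by rewrite /=; lia.
  by rewrite -row_ccf_transform -row_mul mulmxV ?row1 ?ccf_transform_unit.
apply/colP => i; rewrite mxE_mulmx_row row_ccf_transform [RHS]mxE.
by rewrite (@ccf_q_trans_mx_b _ (k + 1)) //; lia.
Qed.

End CanonicalTransformation.

Theorem theorem2 (R : realType) (n : nat)
  (A : int -> 'M[R]_n) (b : int -> 'cV[R]_n) (c : int -> 'rV[R]_n) :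
  completely_controllable A b <->
  exists (At : int -> 'M[R]_n) (bt : int -> 'cV[R]_n) (ct : int -> 'rV[R]_n),
    controller_canonical_form At bt /\ alg_equiv A b c At bt ct.
Proof.
split=> [/controllable_ctrb_mx unitK | [At [bt [ct [ccfAbt [T [unitT eqT]]]]]]].
  pose T := ccf_transform A b.
  exists (fun k => T (k + 1) *m A k *m invmx (T k)), (fun k => T (k + 1) *m b k),
         (fun k => c k *m invmx (T k)).
  split; first exact: ccf_transform_ccf unitK.
  by exists T; split=> // k; exact: ccf_transform_unit unitK k.
apply/controllable_ctrb_mx => k.
have eqAt k' := (eqT k').1; have eqbt k' := (eqT k').2.1.
have := ccf_ctrb_mx_unit ccfAbt k.
by rewrite (ctrb_mx_conj unitT eqAt eqbt) unitmx_mul => /andP[].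
Qed.
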